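(* Let $F:\mathbb{R}^{n+m}\to\mathbb{R}^m$ and $g:\mathbb{R}^{n+m}\to\mathbb{R}^l$ be twice continuously differentiable, assume each component $g_i(x,\cdot)$ is concave in $y$ for every $x$, and assume $F$ is uniformly strongly monotone with respect to $y$ (i.e. there is $c>0$ with $(F(x,y)-F(x,y'))^T(y-y')\ge c\|y-y'\|^2$ for all $x,y,y'$). Let $(\theta_r)_{r>0}$ be a family satisfying conditions (i)–(iv) below. Then for every $r>0$ and every feasible point $(x,y,z,\lambda,e)$ of the relaxed problem $(P_r)$, the Jacobian of the equality constraints $$F(x,y)-\nabla_y g(x,y)^T\lambda=0,\qquad g(x,y)-z=0,\qquad \theta_r(\lambda_i)+\theta_r(z_i)+e_i-1=0\ (i=1,\dots,l)$$ with respect to the variables $(y,z,\lambda)$ (a square matrix of order $m+2l$) is nonsingular.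
   Context: The family $(\theta_r)_{r>0}$, $\theta_r:\mathbb{R}_+\to[0,1]$, satisfies: (i) for each $r>0$, $\theta_r$ is nondecreasing, strictly concave and continuously differentiable; (ii) $\theta_r(0)=0$ for all $r>0$; (iii) for every $x>0$, $\lim_{r\to 0}\theta_r(x)=1$; (iv) $\lim_{r\to0}\theta_r'(0)>0$. Let $\mathcal{X}\subset\mathbb{R}^n$ be nonempty and compact and $f:\mathbb{R}^{n+m}\to\mathbb{R}$ twice continuously differentiable. For $r>0$ the relaxed problem $(P_r)$ is: minimize $f(x,y)$ over $x\in\mathcal{X}$, $y\in\mathbb{R}^m$, $z\in\mathbb{R}^l_+$, $\lambda\in\mathbb{R}^l_+$, $e\in\mathbb{R}^l_+$ subject to $F(x,y)-\nabla_y g(x,y)^T\lambda=0$, $g(x,y)=z$, and $\theta_r(\lambda_i)+\theta_r(z_i)+e_i=1$ for all $i\in\{1,\dots,l\}$. Here $\nabla_y g(x,y)$ denotes the $l\times m$ Jacobian of $g$ with respect to $y$. *)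

From HB Require Import structures.
From mathcomp Require Import all_boot all_order all_algebra.
From mathcomp Require Import all_classical all_reals all_analysis.
Set Implicit Arguments. Unset Strict Implicit. Unset Printing Implicit Defensive.
Import Order.TTheory GRing.Theory Num.Theory.
Import numFieldNormedType.Exports.
Local Open Scope ring_scope.
Local Open Scope classical_set_scope.

Definition C1 (R : realType) p q (f : 'rV[R]_p -> 'rV[R]_q) : Prop :=
  (forall a, differentiable f a) /\ continuous (jacobian f).

Definition C2 (R : realType) p q (f : 'rV[R]_p -> 'rV[R]_q) : Prop :=
  C1 f /\ C1 (fun a => mxvec (jacobian f a)).

Definition dotv (R : realType) k (u v : 'rV[R]_k) : R := \sum_(i < k) u 0 i * v 0 i.
Definition sqnorm (R : realType) k (u : 'rV[R]_k) : R := \sum_(i < k) u 0 i ^+ 2.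

(* partial Jacobian nabla_y g(x,y) in the paper's convention: an l x m matrix,
   row i = gradient of g_i(x,.) at y.  (mathcomp's jacobian is the transpose.) *)
Definition Dy (R : realType) n m l (g : 'rV[R]_(n + m) -> 'rV[R]_l)
  (x : 'rV[R]_n) (y : 'rV[R]_m) : 'M[R]_(l, m) :=
  (jacobian (fun y' => g (row_mx x y')) y)^T.

Definition constr (R : realType) n m l
  (F : 'rV[R]_(n + m) -> 'rV[R]_m) (g : 'rV[R]_(n + m) -> 'rV[R]_l)
  (th : R -> R) (x : 'rV[R]_n) (e : 'rV[R]_l)
  (w : 'rV[R]_(m + (l + l))) : 'rV[R]_(m + (l + l)) :=
  let y := lsubmx w in
  let z := lsubmx (rsubmx w) in
  let la := rsubmx (rsubmx w) in
  row_mx (F (row_mx x y) - la *m Dy g x y)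
    (row_mx (g (row_mx x y) - z)
            (\row_i (th (la 0 i) + th (z 0 i) + e 0 i - 1))).

Definition feasible (R : realType) n m l (X : set 'rV[R]_n)
  (F : 'rV[R]_(n + m) -> 'rV[R]_m) (g : 'rV[R]_(n + m) -> 'rV[R]_l)
  (th : R -> R) (x : 'rV[R]_n) (y : 'rV[R]_m) (z la e : 'rV[R]_l) : Prop :=
  [/\ X x, (forall i, 0 <= z 0 i), (forall i, 0 <= la 0 i) & (forall i, 0 <= e 0 i)] /\
  [/\ F (row_mx x y) - la *m Dy g x y = 0,
      g (row_mx x y) = z &
      forall i, th (la 0 i) + th (z 0 i) + e 0 i = 1].

From HB Require Import structures.
From mathcomp Require Import all_boot all_order all_algebra.
From mathcomp Require Import all_classical all_reals all_analysis.
From mathcomp Require Import lra ring.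
Set Implicit Arguments. Unset Strict Implicit. Unset Printing Implicit Defensive.
Import Order.TTheory GRing.Theory Num.Theory.
Import numFieldNormedType.Exports.
Local Open Scope ring_scope.
Local Open Scope classical_set_scope.

(* Let v = (a, b, c) satisfy v *m J = 0, where J is the Jacobian of the constraint map
   at a feasible point.  Differentiating the three blocks of the constraint map along v
   gives  D_a g(x, .)(y) = b  and  c_i theta'(lambda_i) + b_i theta'(z_i) = 0.  Strict
   concavity and monotonicity of theta force theta' > 0 on [0, +oo), so c_i b_i <= 0.
   The first block is tested against a through difference quotients only: strong
   monotonicity (constant c0) bounds the F-part by c0 |a|^2, and concavity of g(x, .)
   together with lambda >= 0 makes the lambda-term nonpositive (the directional
   derivative of a concave function decreases along its direction).  Letting the step
   go to 0+ gives  c0 |a|^2 <= <c, D_a g(x, .)(y)> = <c, b> <= 0.  Hence a = 0, then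
   b = 0, then c = 0. *)

Section MatrixDifferentiable.
Variables (R : realType) (V : normedModType R).

Lemma differentiable_mx_entry p q (f : V -> 'M[R]_(p, q)) a i j :
  differentiable f a -> differentiable (fun v => f v i j) a.
Proof.
by move=> df; exact: (differentiable_comp df (differentiable_coord _ i j)).
Qed.

Lemma differentiable_mx p q (f : V -> 'M[R]_(p, q)) a :
  (forall i j, differentiable (fun v => f v i j) a) -> differentiable f a.
Proof.
move=> df.
have -> : f = \sum_(i < p) \sum_(j < q) (fun v => f v i j *: delta_mx i j).
  apply/funext => v; rewrite fct_sumE [LHS]matrix_sum_delta.
  by apply: eq_bigr => i _; rewrite fct_sumE.
do 2!apply: differentiable_sum => ?; exact: differentiableZl.
Qed.

Lemma differentiable_row_mx p q1 q2 (f : V -> 'M[R]_(p, q1)) (h : V -> 'M[R]_(p, q2)) a :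
  differentiable f a -> differentiable h a ->
  differentiable (fun v => row_mx (f v) (h v)) a.
Proof.
move=> df dh; apply: differentiable_mx => i j.
rewrite -[j]splitK; case: (fintype.split j) => k /=.
- under eq_fun do rewrite row_mxEl; exact: differentiable_mx_entry.
- under eq_fun do rewrite row_mxEr; exact: differentiable_mx_entry.
Qed.

Lemma differentiable_mulmx p q r (f : V -> 'M[R]_(p, q)) (h : V -> 'M[R]_(q, r)) a :
  differentiable f a -> differentiable h a ->
  differentiable (fun v => f v *m h v) a.
Proof.
move=> df dh; apply: differentiable_mx => i j.
have -> : (fun v => (f v *m h v) i j) = \sum_(k < q) (fun v => f v i k * h v k j).
  by apply/funext => v; rewrite fct_sumE mxE.
apply: differentiable_sum => k.
by apply: differentiableM; exact: differentiable_mx_entry.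
Qed.

Lemma differentiable_trmx p q (f : V -> 'M[R]_(p, q)) a :
  differentiable f a -> differentiable (fun v => (f v)^T) a.
Proof.
move=> df; apply: differentiable_mx => i j.
under eq_fun do rewrite mxE; exact: differentiable_mx_entry.
Qed.

End MatrixDifferentiable.

Section ConcaveDerivative.
Variable R : realType.
Implicit Types (f : R -> R) (a b : R).

Lemma derive1_quotient_cvg f t c : derivable f t 1 ->
  (fun h => h^-1 * (f (h * c + t) - f t)) @ 0^' --> c * derive1 f t.
Proof.
move=> /derivable1_diffP dt; rewrite -[c * _]/((fun h => h *: derive1 f t) c).
by rewrite -diff1E // -deriveE //; exact: diff_derivable.
Qed.

Lemma concave_le_tangent f a b : derivable f a 1 ->
  (forall t, 0 < t < 1 -> (1 - t) * f a + t * f b <= f (a + t * (b - a))) ->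
  f b <= f a + derive1 f a * (b - a).
Proof.
move=> da chord.
have dq : (fun h => h^-1 * (f (h + a) - f a)) @ 0^' --> derive1 f a.
  have := derive1_quotient_cvg (c := 1) da; rewrite mul1r; apply: cvg_trans.
  by apply: near_eq_cvg; apply: nearW => h; rewrite mulr1.
set T := b - a.
have secant_le h : T != 0 -> 0 < h / T < 1 -> h / T * (f b - f a) <= f (h + a) - f a.
  move=> T0 /chord; rewrite mulfVK // [a + h]addrC; lra.
have [Tlt|Tgt|T0] := ltgtP T 0.
- suff : derive1 f a <= (f b - f a) / T by rewrite ler_ndivlMr //; lra.
  apply: (ler_cvg_to (cvg_dnbhs_at_left dq) (cvg_cst _)); near=> h.
  have h0 : h < 0 by near: h; apply: nbhs_left_lt.
  have Th : T < h by near: h; apply: nbhs_left_gt.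
  have /secant_le le_h : 0 < h / T < 1.
    by rewrite ltr_ndivlMr // ltr_ndivrMr // mul0r mul1r h0 Th.
  by rewrite ler_ndivrMl // mulrA mulrAC; apply: le_h; rewrite ltr0_neq0.
- suff : (f b - f a) / T <= derive1 f a by rewrite ler_pdivrMr //; lra.
  apply: (ler_cvg_to (cvg_cst _) (cvg_dnbhs_at_right dq)); near=> h.
  have h0 : 0 < h by near: h; apply: nbhs_right_gt.
  have hT : h < T by near: h; apply: nbhs_right_lt.
  have /secant_le le_h : 0 < h / T < 1.
    by rewrite ltr_pdivlMr // ltr_pdivrMr // mul0r mul1r h0 hT.
  by rewrite ler_pdivlMl // mulrA mulrAC; apply: le_h; rewrite gt_eqF.
- by rewrite T0 mulr0 addr0; move/eqP: T0; rewrite subr_eq0 => /eqP ->.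
Unshelve. all: by end_near.
Qed.

Lemma concave_derive1_le f a b :
  (forall s t u, 0 <= u <= 1 -> u * f s + (1 - u) * f t <= f (u * s + (1 - u) * t)) ->
  derivable f a 1 -> derivable f b 1 -> a < b -> derive1 f b <= derive1 f a.
Proof.
move=> fc da db ab.
have chord s t u : 0 < u < 1 -> (1 - u) * f s + u * f t <= f (s + u * (t - s)).
  move=> u01; rewrite addrC (_ : s + u * (t - s) = u * t + (1 - u) * s); last by ring.
  by apply: fc; lra.
have := concave_le_tangent da (chord a b); have := concave_le_tangent db (chord b a).
nra.
Qed.

(* If f'(a) <= 0, the tangent at a gives f (a + 2) <= f a, and then strict concavity
   at the midpoint a + 1 contradicts monotonicity. *)
Lemma derive1_gt0_strictly_concave f a : 0 <= a ->
  (forall s t, 0 <= s -> s <= t -> f s <= f t) ->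
  (forall s t u, 0 <= s -> 0 <= t -> s != t -> 0 < u < 1 ->
     u * f s + (1 - u) * f t < f (u * s + (1 - u) * t)) ->
  derivable f a 1 -> 0 < derive1 f a.
Proof.
move=> a0 fmono fconc da.
have tangent : f (a + 2) <= f a + derive1 f a * 2.
  have := concave_le_tangent (b := a + 2) da; rewrite [a + 2 - a]addrC addKr.
  apply=> u u01; rewrite addrC (_ : a + u * 2 = u * (a + 2) + (1 - u) * a); last by ring.
  by apply/ltW/fconc => //; [lra | rewrite gt_eqF //; lra].
have midpoint : 2^-1 * f (a + 2) + (1 - 2^-1) * f a < f (2^-1 * (a + 2) + (1 - 2^-1) * a).
  by apply: fconc => //; [lra | rewrite gt_eqF //; lra | lra].
have : f (2^-1 * (a + 2) + (1 - 2^-1) * a) <= f (a + 2) by apply: fmono; lra.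
lra.
Qed.

End ConcaveDerivative.

Section LineDerivative.
Variables (R : realType) (V : normedModType R).

Lemma line_quotientE (W : normedModType R) (f : V -> W) (a y : V) (t : R) :
  (fun h : R => h^-1 *: (((fun s : R => f (s *: a + y)) \o shift t) (h *: 1)
                         - f (t *: a + y))) =
  (fun h : R => h^-1 *: ((f \o shift (t *: a + y)) (h *: a) - f (t *: a + y))).
Proof. by apply/funext => h /=; rewrite [h *: 1]mulr1 scalerDl addrA. Qed.

Variables (p q : nat) (f : V -> 'M[R]_(p, q)) (a y : V).

Lemma derivable_line_entry t i j : derivable f (t *: a + y) a ->
  derivable (fun s : R => f (s *: a + y) i j) t 1.
Proof.
move=> df; have : derivable (fun s : R => f (s *: a + y)) t 1.
  by rewrite /derivable line_quotientE.
by move/derivable_mxP; apply.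
Qed.

Lemma derive1_line_entry t i j : derivable f (t *: a + y) a ->
  derive1 (fun s : R => f (s *: a + y) i j) t = ('D_a f (t *: a + y)) i j.
Proof.
move=> df; have dline : derivable (fun s : R => f (s *: a + y)) t 1.
  by rewrite /derivable line_quotientE.
have -> : 'D_a f (t *: a + y) = 'D_1 (fun s : R => f (s *: a + y)) t.
  by rewrite /derive line_quotientE.
by rewrite derive1E (derive_mx dline) mxE.
Qed.

Lemma concave_derive_entry_le i j h :
  (forall u v (s : R), 0 <= s <= 1 ->
     s * f u i j + (1 - s) * f v i j <= f (s *: u + (1 - s) *: v) i j) ->
  (forall v, derivable f v a) -> 0 < h ->
  ('D_a f (h *: a + y)) i j <= ('D_a f y) i j.
Proof.
move=> fc df h0.
rewrite -[in X in _ <= X](add0r y) -[in X in _ <= X](scale0r a).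
rewrite -!derive1_line_entry //; apply: concave_derive1_le => //.
- move=> s t u u01 /=.
  have -> : (u * s + (1 - u) * t) *: a + y = u *: (s *: a + y) + (1 - u) *: (t *: a + y).
    rewrite !scalerDr !scalerA addrACA -scalerDl -[in RHS]scalerDl.
    by rewrite (_ : u + (1 - u) = 1) ?scale1r //; ring.
  exact: fc.
- exact: derivable_line_entry.
- exact: derivable_line_entry.
Qed.

End LineDerivative.

Section DotProduct.
Variables (R : realType) (k : nat).
Implicit Types u v w : 'rV[R]_k.

Lemma dotvE u v : (u *m v^T) 0 0 = dotv u v.
Proof. by rewrite mxE; apply: eq_bigr => i _; rewrite mxE. Qed.

Lemma dotvDl u v w : dotv (u + v) w = dotv u w + dotv v w.
Proof. by rewrite /dotv -big_split; apply: eq_bigr => i _; rewrite !mxE mulrDl. Qed.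

Lemma dotvBl u v w : dotv (u - v) w = dotv u w - dotv v w.
Proof. by rewrite /dotv -sumrB; apply: eq_bigr => i _; rewrite !mxE mulrBl. Qed.

Lemma dotvZl h u v : dotv (h *: u) v = h * dotv u v.
Proof. by rewrite /dotv mulr_sumr; apply: eq_bigr => i _; rewrite !mxE mulrA. Qed.

Lemma dotvZr h u v : dotv u (h *: v) = h * dotv u v.
Proof. by rewrite /dotv mulr_sumr; apply: eq_bigr => i _; rewrite !mxE mulrCA. Qed.

Lemma dotv0l v : dotv 0 v = 0.
Proof. by rewrite /dotv big1 // => i _; rewrite mxE mul0r. Qed.

Lemma ler_dotv2l u v w : (forall i, 0 <= u 0 i) -> (forall i, v 0 i <= w 0 i) ->
  dotv u v <= dotv u w.
Proof. by move=> u0 vw; apply: ler_sum => i _; apply: ler_wpM2l. Qed.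

Lemma continuous_dotvl v : continuous (fun u => dotv u v).
Proof.
move=> u; apply: differentiable_continuous.
under eq_fun do rewrite -dotvE.
by apply: differentiable_mx_entry; apply: differentiable_mulmx.
Qed.

Lemma sqnormZ h u : sqnorm (h *: u) = h ^+ 2 * sqnorm u.
Proof. by rewrite /sqnorm mulr_sumr; apply: eq_bigr => i _; rewrite !mxE exprMn. Qed.

Lemma sqnorm_le0 u : sqnorm u <= 0 -> u = 0.
Proof.
move=> u0; have /psumr_eq0P u2 : sqnorm u = 0.
  by apply/eqP; rewrite eq_le u0 sumr_ge0 // => i _; exact: sqr_ge0.
apply/rowP => i; apply/eqP; rewrite mxE -sqrf_eq0; apply/eqP/u2 => // j _.
exact: sqr_ge0.
Qed.

End DotProduct.

Lemma dotv_mulmxl (R : realType) k p (u : 'rV[R]_k) (M : 'M[R]_(k, p)) (v : 'rV[R]_p) :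
  dotv (u *m M) v = dotv u (v *m M^T).
Proof. by rewrite -[LHS]dotvE -[RHS]dotvE trmx_mul trmxK mulmxA. Qed.

Section PartialJacobian.
Variables (R : realType) (n m l : nat) (g : 'rV[R]_(n + m) -> 'rV[R]_l) (x : 'rV[R]_n).
Hypothesis dg : forall p, differentiable g p.

Local Notation G := (fun y => g (row_mx x y)).

Lemma diff_row_mxr (y u : 'rV[R]_m) : 'd (row_mx x) y u = row_mx 0 u.
Proof.
rewrite -deriveE; last exact: differentiable_row_mx.
apply: cvg_lim => //; apply: cvg_near_cst; near=> h.
have h0 : h != 0 by near: h; exact: nbhs_dnbhs_neq.
rewrite /= opp_row_mx add_row_mx subrr addrK scale_row_mx scaler0 scalerA.
by rewrite mulVf // scale1r.
Unshelve. all: by end_near.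
Qed.

Lemma differentiable_partial y : differentiable G y.
Proof. exact: differentiable_comp (differentiable_row_mx _ _) (dg _). Qed.

Lemma derive_partial y u : 'D_u G y = row_mx 0 u *m 'J g (row_mx x y).
Proof.
rewrite deriveE; last exact: differentiable_partial.
rewrite -[G]/(g \o row_mx x) diff_comp //; last exact: differentiable_row_mx.
by rewrite /= diff_row_mxr /jacobian mul_rV_lin1.
Qed.

Lemma jacobian_partial y : 'J G y = row_mx 0 1%:M *m 'J g (row_mx x y).
Proof.
apply/row_matrixP => i; rewrite !rowE mulmxA -deriveEjacobian.
  by rewrite derive_partial mul_mx_row mulmx0 mulmx1.
exact: differentiable_partial.
Qed.

Lemma mulmx_trDy y a : a *m (Dy g x y)^T = 'D_a G y.
Proof. by rewrite trmxK -deriveEjacobian //; exact: differentiable_partial. Qed.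

End PartialJacobian.

Section ConstraintMap.
Variables (R : realType) (n m l : nat).
Variables (F : 'rV[R]_(n + m) -> 'rV[R]_m) (g : 'rV[R]_(n + m) -> 'rV[R]_l).
Variables (th : R -> R) (x : 'rV[R]_n) (e : 'rV[R]_l).
Hypothesis dF : forall p, differentiable F p.
Hypothesis dg : forall p, differentiable g p.
Hypothesis dJg : forall p, differentiable (fun q => mxvec ('J g q)) p.
Hypothesis dth : forall t, derivable th t 1.

Lemma constrE y z la : constr F g th x e (row_mx y (row_mx z la)) =
  row_mx (F (row_mx x y) - la *m Dy g x y)
    (row_mx (g (row_mx x y) - z) (\row_i (th (la 0 i) + th (z 0 i) + e 0 i - 1))).
Proof. by rewrite /constr /= !row_mxKr !row_mxKl. Qed.

Lemma differentiable_jacobian_comp (V : normedModType R) (P : V -> 'rV[R]_(n + m)) v :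
  differentiable P v -> differentiable (fun v => 'J g (P v)) v.
Proof.
move=> dP; apply: differentiable_mx => i j.
under eq_fun do rewrite -mxvecE.
exact/differentiable_mx_entry/(differentiable_comp dP (dJg _)).
Qed.

Lemma differentiable_Dy (V : normedModType R) (P : V -> 'rV[R]_m) v :
  differentiable P v -> differentiable (fun v => Dy g x (P v)) v.
Proof.
move=> dP; under eq_fun do rewrite /Dy jacobian_partial //.
apply/differentiable_trmx/differentiable_mulmx => //.
exact/differentiable_jacobian_comp/differentiable_row_mx.
Qed.

Lemma differentiable_constr w : differentiable (constr F g th x e) w.
Proof.
pose y := fun w : 'rV[R]_(m + (l + l)) => lsubmx w.
pose z := fun w : 'rV[R]_(m + (l + l)) => lsubmx (rsubmx w).
pose la := fun w : 'rV[R]_(m + (l + l)) => rsubmx (rsubmx w).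
have dy : differentiable y w by exact: differentiable_lsubmx.
have dz : differentiable z w.
  exact: differentiable_comp (differentiable_rsubmx _) (differentiable_lsubmx _).
have dla : differentiable la w.
  exact: differentiable_comp (differentiable_rsubmx _) (differentiable_rsubmx _).
have dxy : differentiable (fun w => row_mx x (y w)) w by exact: differentiable_row_mx.
apply: differentiable_row_mx; last apply: differentiable_row_mx.
- apply: differentiableB; first exact: differentiable_comp dxy (dF _).
  by apply: differentiable_mulmx => //; exact: differentiable_Dy.
- apply: differentiableB => //; exact: differentiable_comp dxy (dg _).
- apply: differentiable_mx => i j; under eq_fun do rewrite mxE.
  have dth_entry (P : 'rV[R]_(m + (l + l)) -> 'rV[R]_l) :
      differentiable P w -> differentiable (fun w => th (P w 0 j)) w.
    move=> dP; apply: differentiable_comp (differentiable_mx_entry _ _ dP) _.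
    exact/derivable1_diffP.
  apply: differentiableB => //; apply: differentiableD => //.
  by apply: differentiableD; exact: dth_entry.
Qed.

Variables (y : 'rV[R]_m) (z la : 'rV[R]_l) (a : 'rV[R]_m) (b c : 'rV[R]_l).
Hypothesis kernel :
  row_mx a (row_mx b c) *m 'J (constr F g th x e) (row_mx y (row_mx z la)) = 0.

Local Notation G := (fun y => g (row_mx x y)).
Local Notation q := (fun h : R => h^-1 *: (constr F g th x e
  (h *: row_mx a (row_mx b c) + row_mx y (row_mx z la)) - constr F g th x e (row_mx y (row_mx z la)))).

Lemma kernel_quotient_cvg0 : q @ 0^' --> (0 : 'rV[R]_(m + (l + l))).
Proof.
have dC : differentiable (constr F g th x e) (row_mx y (row_mx z la)).
  exact: differentiable_constr.
rewrite -kernel -deriveEjacobian //; exact: diff_derivable.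
Qed.

Lemma kernel_quotient_map_cvg0 (W : normedModType R) (P : 'rV[R]_(m + (l + l)) -> W) :
  continuous P -> P 0 = 0 -> (P \o q) @ 0^' --> (0 : W).
Proof.
move=> cP P0; rewrite -[X in _ --> X]P0.
exact: continuous_cvg (cP 0) kernel_quotient_cvg0.
Qed.

(* [h^-1 *: (h *: b)] is [b] only for [h != 0]. *)
Lemma kernel_quotientE h : q h =
  row_mx (h^-1 *: (F (row_mx x (h *: a + y)) - (h *: c + la) *m Dy g x (h *: a + y)
                   - (F (row_mx x y) - la *m Dy g x y)))
    (row_mx (h^-1 *: (G (h *: a + y) - G y) - h^-1 *: (h *: b))
       (\row_i (h^-1 * (th (h * c 0 i + la 0 i) - th (la 0 i))
                + h^-1 * (th (h * b 0 i + z 0 i) - th (z 0 i))))).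
Proof.
rewrite [LHS]/= !scale_row_mx !add_row_mx !constrE !opp_row_mx !add_row_mx.
rewrite !scale_row_mx; congr (row_mx _ (row_mx _ _)); apply/rowP => i; rewrite !mxE; ring.
Qed.

Lemma kernel_derive_partial : 'D_a G y = b.
Proof.
pose P (M : 'rV[R]_(m + (l + l))) : 'rV[R]_l := lsubmx (rsubmx M).
have lim0 : (P \o q) @ 0^' --> (0 : 'rV[R]_l).
  apply: kernel_quotient_map_cvg0 => [M|]; last by apply/rowP => i; rewrite !mxE.
  apply: differentiable_continuous.
  exact: differentiable_comp (differentiable_rsubmx _) (differentiable_lsubmx _).
have limD : (P \o q) @ 0^' --> 'D_a G y - b.
  have dG : derivable G y a by exact/diff_derivable/differentiable_partial.
  apply: cvg_trans (near_eq_cvg _) (cvgB dG (cvg_cst b)).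
  near=> h; have h0 : h != 0 by near: h; exact: nbhs_dnbhs_neq.
  by rewrite /P /= kernel_quotientE row_mxKr row_mxKl scalerA mulVf // scale1r.
by apply/eqP; rewrite -subr_eq0; apply/eqP; exact: cvg_unique limD lim0.
Unshelve. all: by end_near.
Qed.

Lemma kernel_theta i :
  c 0 i * derive1 th (la 0 i) + b 0 i * derive1 th (z 0 i) = 0.
Proof.
pose P (M : 'rV[R]_(m + (l + l))) : R := rsubmx (rsubmx M) 0 i.
have lim0 : (P \o q) @ 0^' --> (0 : R).
  apply: kernel_quotient_map_cvg0 => [M|]; last by rewrite /P !mxE.
  apply/differentiable_continuous/differentiable_mx_entry.
  exact: differentiable_comp (differentiable_rsubmx _) (differentiable_rsubmx _).
have limD : (P \o q) @ 0^' --> c 0 i * derive1 th (la 0 i) + b 0 i * derive1 th (z 0 i).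
  have -> : P \o q = fun h => h^-1 * (th (h * c 0 i + la 0 i) - th (la 0 i))
                             + h^-1 * (th (h * b 0 i + z 0 i) - th (z 0 i)).
    by apply/funext => h; rewrite /P /= kernel_quotientE !row_mxKr mxE.
  by apply: cvgD; exact: derive1_quotient_cvg.
exact: cvg_unique limD lim0.
Qed.

Hypothesis g_concave : forall (u u' : 'rV[R]_m) (t : R) (i : 'I_l), 0 <= t <= 1 ->
  t * G u 0 i + (1 - t) * G u' 0 i <= G (t *: u + (1 - t) *: u') 0 i.
Variable c0 : R.
Hypothesis F_strongly_monotone : forall u u' : 'rV[R]_m,
  c0 * sqnorm (u - u') <= dotv (F (row_mx x u) - F (row_mx x u')) (u - u').
Hypothesis la_ge0 : forall i, 0 <= la 0 i.

Lemma dotv_first_block_ge h (A A0 : 'rV[R]_m) (M M0 : 'M[R]_(l, m)) (D D0 : 'rV[R]_l) :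
  0 < h -> a *m M^T = D -> a *m M0^T = D0 ->
  c0 * (h ^+ 2 * sqnorm a) <= h * dotv (A - A0) a -> dotv la D <= dotv la D0 ->
  c0 * sqnorm a - dotv c D <= dotv (h^-1 *: (A - (h *: c + la) *m M - (A0 - la *m M0))) a.
Proof.
move=> h0 <- <- mono conc.
rewrite dotvZl !dotvBl mulmxDl -scalemxAl dotvDl dotvZl !dotv_mulmxl ler_pdivlMl //.
rewrite dotvBl in mono; nra.
Qed.

Lemma kernel_quotient_dotv_ge h : 0 < h ->
  c0 * sqnorm a - dotv c ('D_a G (h *: a + y)) <= dotv (lsubmx (q h)) a.
Proof.
move=> h0; rewrite -[lsubmx _]/(lsubmx (_ *: _)) kernel_quotientE row_mxKl.
apply: dotv_first_block_ge; rewrite ?(mulmx_trDy x dg) //.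
  by have := F_strongly_monotone (h *: a + y) y; rewrite addrK sqnormZ dotvZr.
apply: ler_dotv2l => // i; apply: concave_derive_entry_le => // [u u' s|v].
  exact: g_concave.
exact/diff_derivable/differentiable_partial.
Qed.

Lemma cvg_dotv_derive_partial :
  (fun h => dotv c ('D_a G (h *: a + y))) @ 0^'+ --> dotv c ('D_a G y).
Proof.
pose f h := (c *m (row_mx 0 a *m 'J g (row_mx x (h *: a + y)))^T) 0 0.
have fE h : dotv c ('D_a G (h *: a + y)) = f h by rewrite (derive_partial x dg) /f dotvE.
have -> : (fun h => dotv c ('D_a G (h *: a + y))) = f by apply/funext => h; rewrite fE.
have -> : dotv c ('D_a G y) = f 0 by rewrite -fE scale0r add0r.
apply: cvg_within_filter; apply: differentiable_continuous.
rewrite /f; apply/differentiable_mx_entry/differentiable_mulmx => //.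
apply/differentiable_trmx/differentiable_mulmx => //.
by apply: differentiable_jacobian_comp => //; apply: differentiable_row_mx.
Qed.

Lemma kernel_monotone : c0 * sqnorm a <= dotv c b.
Proof.
pose P (M : 'rV[R]_(m + (l + l))) : R := dotv (lsubmx M) a.
have lim0 : (P \o q) @ 0^' --> (0 : R).
  apply: kernel_quotient_map_cvg0 => [M|]; last by rewrite /P linear0 dotv0l.
  apply: (@continuous_comp _ _ _ lsubmx (fun u => dotv u a)).
    exact: continuous_lsubmx.
  exact: continuous_dotvl.
rewrite -kernel_derive_partial -subr_le0.
apply: (ler_cvg_to (cvgB (cvg_cst _) cvg_dotv_derive_partial) (cvg_dnbhs_at_right lim0)).
near=> h; apply: kernel_quotient_dotv_ge.
by near: h; exact: nbhs_right_gt.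
Unshelve. all: by end_near.
Qed.

Hypothesis c0_gt0 : 0 < c0.
Hypothesis z_ge0 : forall i, 0 <= z 0 i.
Hypothesis th_nondecr : forall s t, 0 <= s -> s <= t -> th s <= th t.
Hypothesis th_strictly_concave : forall s t u, 0 <= s -> 0 <= t -> s != t -> 0 < u < 1 ->
  u * th s + (1 - u) * th t < th (u * s + (1 - u) * t).

Lemma kernel_trivial : row_mx a (row_mx b c) = 0.
Proof.
have th'_gt0 t : 0 <= t -> 0 < derive1 th t.
  by move=> t0; exact: derive1_gt0_strictly_concave.
have cb_le0 : dotv c b <= 0.
  apply: sumr_le0 => i _; have := kernel_theta i.
  have := th'_gt0 _ (la_ge0 i); have := th'_gt0 _ (z_ge0 i).
  move: (derive1 th (la 0 i)) (derive1 th (z 0 i)) => P Q Q0 P0 /eqP.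
  rewrite addr_eq0 => /eqP cP.
  have : c 0 i * b 0 i * P <= 0.
    by rewrite mulrAC cP mulNr oppr_le0 mulrAC -expr2 mulr_ge0 ?sqr_ge0 ?ltW.
  nra.
have a0 : a = 0.
  by apply: sqnorm_le0; rewrite -(pmulr_rle0 _ c0_gt0); exact: le_trans kernel_monotone cb_le0.
have b0 : b = 0 by rewrite -kernel_derive_partial a0 derive0.
have c0' : c = 0.
  apply/rowP => i; rewrite mxE; apply/eqP.
  have := kernel_theta i; rewrite b0 mxE mul0r addr0 => /eqP.
  by rewrite mulf_eq0 (gt_eqF (th'_gt0 _ (la_ge0 i))) orbF.
by rewrite a0 b0 c0' !row_mx0.
Qed.

End ConstraintMap.

Theorem lemma3 (R : realType) (n m l : nat) (X : set 'rV[R]_n)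
  (F : 'rV[R]_(n + m) -> 'rV[R]_m) (g : 'rV[R]_(n + m) -> 'rV[R]_l)
  (theta : R -> R -> R) :
  compact X -> X !=set0 ->
  C2 F -> C2 g ->
  (forall (x : 'rV[R]_n) (y y' : 'rV[R]_m) (t : R) (i : 'I_l), 0 <= t <= 1 ->
     t * g (row_mx x y) 0 i + (1 - t) * g (row_mx x y') 0 i
       <= g (row_mx x (t *: y + (1 - t) *: y')) 0 i) ->
  (exists c : R, 0 < c /\ forall (x : 'rV[R]_n) (y y' : 'rV[R]_m),
     c * sqnorm (y - y') <= dotv (F (row_mx x y) - F (row_mx x y')) (y - y')) ->
  (* (i) *)
  (forall r : R, 0 < r ->
     [/\ (forall a, 0 <= a -> 0 <= theta r a <= 1),
         (forall a b, 0 <= a -> a <= b -> theta r a <= theta r b),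
         (forall a b t, 0 <= a -> 0 <= b -> a != b -> 0 < t < 1 ->
            t * theta r a + (1 - t) * theta r b < theta r (t * a + (1 - t) * b)),
         (forall a, derivable (theta r) a 1) &
         continuous (derive1 (theta r))]) ->
  (* (ii) *)
  (forall r : R, 0 < r -> theta r 0 = 0) ->
  (* (iii) *)
  (forall a : R, 0 < a -> (fun r => theta r a) @ 0^'+ --> (1 : R)) ->
  (* (iv) *)
  (exists L : \bar R, (0 < L)%E /\ (fun r => ((derive1 (theta r)) 0)%:E) @ 0^'+ --> L) ->
  forall (r : R), 0 < r ->
  forall (x : 'rV[R]_n) (y : 'rV[R]_m) (z la e : 'rV[R]_l),
    feasible X F g (theta r) x y z la e ->
    jacobian (constr F g (theta r) x e) (row_mx y (row_mx z la)) \in unitmx.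
Proof.
(* Only (i), the C^2 bounds and the sign constraints z, lambda >= 0 are used. *)
move=> _ _ [[dF _] _] [[dg _] [dJg _]] g_concave [c0 [c0_gt0 F_monotone]] theta_r _ _ _.
move=> r r0 x y z la e [[_ z_ge0 la_ge0 _] _].
have [_ th_nondecr th_concave dth _] := theta_r r r0.
rewrite -row_free_unit; apply: inj_row_free => v kernel.
rewrite -[v]hsubmxK -[rsubmx v]hsubmxK in kernel *.
exact: (kernel_trivial dF dg dJg dth kernel (g_concave x) (F_monotone x)
  la_ge0 c0_gt0 z_ge0 th_nondecr th_concave).
Qed.
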